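(* Let $\mathcal{C}$ be a simplicial complex on ground set $[n]$. Then $\mathcal{C}$ is unimodular if and only if its Alexander dual $\mathcal{C}^*$ is unimodular.
   Context: A simplicial complex on $[n]$ is a family of subsets of $[n]$ closed under subsets; facets are inclusion-maximal faces. $\mathcal{C}^*=\{S\subseteq[n]:[n]\setminus S\notin\mathcal{C}\}$, on ground set $[n]$. $\mathcal{A}_{\mathcal{C}}$ is the $0/1$ matrix with columns indexed by $\mathbf{i}\in\{1,2\}^n$ and rows indexed by pairs $(F,\mathbf{e})$ with $F$ a facet and $\mathbf{e}\in\{1,2\}^F$; entry $1$ iff $\mathbf{e}=\mathbf{i}|_F$. An integer matrix is unimodular if every circuit (nonzero integer kernel vector with coprime entries and inclusion-minimal support) has entries in $\{0,\pm1\}$. $\mathcal{C}$ is unimodular if $\mathcal{A}_{\mathcal{C}}$ is. *)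

From mathcomp Require Import all_boot all_order all_algebra.
Set Implicit Arguments. Unset Strict Implicit. Unset Printing Implicit Defensive.
Import GRing.Theory Num.Theory.
Local Open Scope ring_scope.

(* Ground set [n] is 'I_n.  The set {1,2} is encoded by bool (false = 1, true = 2). *)

Definition simplicial_complex (n : nat) (C : {set {set 'I_n}}) : Prop :=
  forall F G : {set 'I_n}, F \in C -> G \subset F -> G \in C.

Definition is_facet (n : nat) (C : {set {set 'I_n}}) (F : {set 'I_n}) : bool :=
  (F \in C) && [forall G in C, (F \subset G) ==> (G == F)].

Definition alexander_dual (n : nat) (C : {set {set 'I_n}}) : {set {set 'I_n}} :=
  [set S : {set 'I_n} | ~: S \notin C].

Definition colT (n : nat) := {ffun 'I_n -> bool}.

(* Rows of A_C : pairs (F, e) with F a facet and e in {1,2}^F; e is represented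
   by a function on [n] which is canonically "1" (false) outside F. *)
Definition is_row (n : nat) (C : {set {set 'I_n}}) (r : {set 'I_n} * colT n) : bool :=
  is_facet C r.1 && [forall j, (j \notin r.1) ==> ~~ r.2 j].

Definition rowT (n : nat) (C : {set {set 'I_n}}) :=
  {r : {set 'I_n} * colT n | is_row C r}.

Definition A_mat (n : nat) (C : {set {set 'I_n}}) (r : rowT C) (i : colT n) : int :=
  ([forall j in (val r).1, (val r).2 j == i j] : bool)%:R.

Section Unimod.
Variables (R K : finType) (A : R -> K -> int).

Definition in_kernel (u : {ffun K -> int}) : bool :=
  [forall r, \sum_(k : K) A r k * u k == 0].

Definition supp (u : {ffun K -> int}) : {set K} := [set k | u k != 0].

Definition circuit (u : {ffun K -> int}) : Prop :=
  [/\ in_kernel u, u != 0,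
      \big[gcdn/0%N]_(k : K) `|u k|%N = 1%N &
      forall v : {ffun K -> int}, in_kernel v -> v != 0 -> ~ (supp v \proper supp u)].

Definition unimodular_mx : Prop :=
  forall u, circuit u -> forall k, u k \in [:: -1; 0; 1].
End Unimod.

Definition unimodular_complex (n : nat) (C : {set {set 'I_n}}) : Prop :=
  unimodular_mx (@A_mat n C).

(* A matrix is unimodular iff each of its support-minimal integer kernel vectors has all
   nonzero entries of equal absolute value.  The Walsh characters
   walsh S i = prod_(j in S) (-1)^[i_j = 2] form an orthogonal basis of Z^({1,2}^n); the kernel
   of A_C consists of the vectors orthogonal to walsh S for every S in C, and, after the sign
   change u_i -> walsh [n] i * u_i (which turns walsh S into walsh ([n] \ S)), the kernel of
   A_{C^*} consists of the vectors orthogonal to walsh T for every T not in C.  The two kernels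
   are therefore, over Q, spanned by complementary parts of one orthogonal basis.  For a support-minimal
   w on one side and t0, t1 in its support, the Fredholm alternative yields a support-minimal v
   on the other side whose support meets supp w exactly in {t0, t1}; then v . w = 0 reads
   v_t0 w_t0 + v_t1 w_t1 = 0, and |v_t0| = |v_t1| forces |w_t0| = |w_t1|. *)

From mathcomp Require Import all_boot all_order all_algebra.
From mathcomp Require Import ring.
From Stdlib Require Import Classical.
Set Implicit Arguments. Unset Strict Implicit. Unset Printing Implicit Defensive.
Import Order.TTheory GRing.Theory Num.Theory.
Local Open Scope ring_scope.

Section SupportMinimal.
Variable K : finType.
Implicit Types (u v : {ffun K -> int}) (X Y : {ffun K -> int} -> Prop).

Definition support_minimal X u :=
  [/\ X u, u != 0 & forall v, X v -> v != 0 -> ~ supp v \proper supp u].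

Definition balanced X := forall u, support_minimal X u ->
  forall k l, u k != 0 -> u l != 0 -> `|u k| = `|u l|.

Lemma in_supp u k : (k \in supp u) = (u k != 0).
Proof. by rewrite inE. Qed.

Lemma ffun_neq0P u : reflect (exists k, u k != 0) (u != 0).
Proof.
apply: (iffP idP) => [nz|[k]]; last by apply: contraNneq => ->; rewrite ffunE.
apply/existsP; apply: contraNT nz => /existsPn u0.
by apply/eqP/ffunP => k; rewrite ffunE; apply/eqP/negbNE/u0.
Qed.

Lemma balanced_ext X Y : (forall u, X u <-> Y u) -> balanced X -> balanced Y.
Proof.
move=> XY balX u [Yu u0 umin]; apply: balX; split => [||v /XY]; last exact: umin.
- exact/XY.
- exact: u0.
Qed.

Lemma eq_balanced X Y : (forall u, X u <-> Y u) -> balanced X <-> balanced Y.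
Proof. by move=> XY; split; apply: balanced_ext => // u; apply: iff_sym. Qed.

Definition content u := \big[gcdn/0%N]_k `|u k|%N.

Lemma content_dvd u k : (content u %| `|u k|)%N.
Proof. by rewrite /content (bigD1 k) //= dvdn_gcdl. Qed.

Lemma dvdn_content u d : (forall k, d %| `|u k|)%N -> (d %| content u)%N.
Proof.
move=> dvd_u; apply: (big_ind (fun x => d %| x)%N) => [|x y dx dy|k _].
- exact: dvdn0.
- by rewrite dvdn_gcd dx dy.
- exact: dvd_u.
Qed.

Lemma content_eq0 u : (content u == 0%N) = (u == 0).
Proof.
apply/eqP/eqP => [c0|->].
  apply/ffunP => k; rewrite ffunE; apply/eqP; rewrite -absz_eq0 -dvd0n -c0.
  exact: content_dvd.
by apply/eqP; rewrite -dvd0n dvdn_content // => k; rewrite ffunE.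
Qed.

Definition primitive u := [ffun k => (u k %/ (content u)%:Z)%Z].

Lemma primitiveK u k : primitive u k * (content u)%:Z = u k.
Proof. by rewrite ffunE divzK // dvdzE content_dvd. Qed.

Lemma primitive_eq0 u k : u != 0 -> (primitive u k == 0) = (u k == 0).
Proof.
rewrite -content_eq0 => c0; have cZ0 : (content u)%:Z != 0 by [].
by rewrite -[u k]primitiveK mulf_eq0 (negbTE cZ0) orbF.
Qed.

Lemma content_primitive u : u != 0 -> content (primitive u) = 1%N.
Proof.
rewrite -content_eq0 -lt0n => c_gt0; apply/eqP.
rewrite -(eqn_pmul2l c_gt0) muln1 {2}/content.
rewrite (big_endo (muln (content u)) (muln_gcdr _)) ?muln0 //.
apply/eqP/eq_bigr => k _.
by rewrite -{1}[u k]primitiveK abszM mulnC.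
Qed.

Variables (R : finType) (A : R -> K -> int).

Lemma in_kernel_primitive u : u != 0 -> in_kernel A u -> in_kernel A (primitive u).
Proof.
rewrite -content_eq0 => c0 /forallP ker_u; apply/forallP => r.
have cZ0 : (content u)%:Z != 0 by [].
rewrite -(mulIr_eq0 _ (mulIf cZ0)) mulr_suml.
by under eq_bigr do rewrite -mulrA primitiveK.
Qed.

Lemma primitive_circuit u : support_minimal (in_kernel A) u -> circuit A (primitive u).
Proof.
move=> [ker_u u0 umin].
have supp_primitive : supp (primitive u) = supp u.
  by apply/setP => k; rewrite !in_supp primitive_eq0.
split; rewrite ?supp_primitive //.
- exact: in_kernel_primitive.
- have [k uk] := ffun_neq0P _ u0.
  by apply/ffun_neq0P; exists k; rewrite primitive_eq0.
- exact: content_primitive.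
Qed.

Lemma unimodular_mxE : unimodular_mx A <-> balanced (in_kernel A).
Proof.
split=> [unimodA u umin k l uk ul | balA u [ker_u u0 content1 umin] k].
- have [_ u0 _] := umin.
  have abs_content j : u j != 0 -> `|u j| = (content u)%:Z.
    move=> uj; have normc : `|(content u)%:Z| = (content u)%:Z by [].
    rewrite -primitiveK normrM normc.
    have := unimodA _ (primitive_circuit umin) j.
    have : primitive u j != 0 by rewrite primitive_eq0.
    by rewrite !inE; case: (primitive u j) => [[|[|?]]|[|?]] //= _ _; rewrite mul1r.
  by rewrite !abs_content.
- have [-> | uk] := eqVneq (u k) 0; first by rewrite !inE eqxx orbT.
  have : (`|u k| %| 1)%N.
    rewrite -content1; apply: dvdn_content => j.
    have [-> | uj] := eqVneq (u j) 0; first exact: dvdn0.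
    by have := balA u (And3 ker_u u0 umin) k j uk uj; rewrite -!abszE => [[->]].
  by rewrite dvdn1; case: (u k) uk => [[|[|?]]|[|?]].
Qed.

End SupportMinimal.

Section Twist.
Variables (K : finType) (sgn : K -> int).
Hypothesis sgn_sqr : forall k, sgn k * sgn k = 1.
Implicit Types (u v : {ffun K -> int}) (X : {ffun K -> int} -> Prop).

Definition twist u : {ffun K -> int} := [ffun k => sgn k * u k].

Lemma twistK : involutive twist.
Proof. by move=> u; apply/ffunP => k; rewrite !ffunE mulrA sgn_sqr mul1r. Qed.

Lemma norm_sgn k : `|sgn k| = 1.
Proof. by apply/eqP; rewrite -sqr_norm_eq1 expr2 sgn_sqr. Qed.

Lemma supp_twist u : supp (twist u) = supp u.
Proof.
apply/setP => k; have sgn_neq0 : sgn k != 0 by rewrite -normr_eq0 norm_sgn oner_neq0.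
by rewrite !in_supp ffunE mulf_eq0 negb_or sgn_neq0.
Qed.

Lemma twist_eq0 u : (twist u == 0) = (u == 0).
Proof.
have twist0 : twist 0 = 0 by apply/ffunP => k; rewrite !ffunE mulr0.
by rewrite -{1}twist0 (inj_eq (can_inj twistK)).
Qed.

Lemma support_minimal_twist X u :
  support_minimal (X \o twist) u -> support_minimal X (twist u).
Proof.
move=> [Xu u0 umin]; split; rewrite ?twist_eq0 // => v Xv v0.
by rewrite supp_twist -(supp_twist v); apply: umin; rewrite /= ?twistK ?twist_eq0.
Qed.

Lemma balanced_twist X : balanced X -> balanced (X \o twist).
Proof.
move=> balX u umin k l uk ul; have := balX _ (support_minimal_twist umin) k l.
by rewrite -!in_supp supp_twist !in_supp !ffunE !normrM !norm_sgn !mul1r; apply.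
Qed.

Lemma balanced_twistE X : balanced X <-> balanced (X \o twist).
Proof.
split=> [|/balanced_twist]; first exact: balanced_twist.
by apply: balanced_ext => u /=; rewrite twistK.
Qed.

End Twist.

Lemma sum_ord_enum_rank (T : finType) (V : nmodType) (G : 'I_#|T| -> V) :
  \sum_i G i = \sum_t G (enum_rank t).
Proof. by rewrite (reindex (@enum_rank T)) //; apply: onW_bij; exact: enum_rank_bij. Qed.

Lemma fredholm_alternative (F : fieldType) (J K : finType) (f : J -> K -> F) (b : K -> F) :
  (exists lam : J -> F, forall k, b k = \sum_j lam j * f j k) \/
  (exists x : K -> F, (forall j, \sum_k f j k * x k = 0) /\ \sum_k b k * x k != 0).
Proof.
pose M : 'M[F]_(#|J|, #|K|) := \matrix_(r, c) f (enum_val r) (enum_val c).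
pose B : 'rV[F]_#|K| := \row_c b (enum_val c).
have [/submxP [L BL] | ] := boolP (B <= M)%MS.
  left; exists (fun j => L 0 (enum_rank j)) => k.
  have := congr1 (fun A : 'rV[F]_#|K| => A 0 (enum_rank k)) BL.
  rewrite !mxE enum_rankK sum_ord_enum_rank => ->.
  by apply: eq_bigr => j _; rewrite !mxE !enum_rankK.
rewrite submxE => /rV0Pn [c Bc].
right; exists (fun k => cokermx M (enum_rank k) c); split.
  move=> j; have := congr1 (fun A : 'M[F]_(#|J|, #|K|) => A (enum_rank j) c) (mulmx_coker M).
  rewrite !mxE sum_ord_enum_rank => coker0; rewrite -[RHS]coker0.
  by apply: eq_bigr => k _; rewrite !mxE !enum_rankK.
move: Bc; rewrite !mxE sum_ord_enum_rank.
by under eq_bigr do rewrite [B _ _]mxE enum_rankK.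
Qed.

Lemma clear_denominators (K : finType) (x : K -> rat) :
  exists (y : {ffun K -> int}) (d : int), d != 0 /\ forall k, (y k)%:~R = d%:~R * x k.
Proof.
exists [ffun k => numq (x k) * \prod_(j | j != k) denq (x j)], (\prod_j denq (x j)).
split=> [|k]; first by rewrite prodf_seq_neq0; apply/allP => j _; rewrite denq_neq0.
rewrite ffunE [in RHS](bigD1 k) //= !intrM numqE; ring.
Qed.

Section OrthogonalComplement.
Variables (I K : finType) (g : I -> K -> int) (c : int).
Hypotheses (c_neq0 : c != 0)
  (g_rows : forall a b, \sum_k g a k * g b k = c * (a == b)%:R)
  (g_cols : forall k l, \sum_a g a k * g a l = c * (k == l)%:R).
Implicit Types (P : pred I) (u v w x : {ffun K -> int}).

Definition annihilated P u : Prop := forall a, P a -> \sum_k g a k * u k = 0.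

Lemma parseval v w :
  c * \sum_k v k * w k = \sum_a (\sum_k g a k * v k) * (\sum_l g a l * w l).
Proof.
under [RHS]eq_bigr do rewrite big_distrl /=.
under [RHS]eq_bigr do under eq_bigr do rewrite big_distrr /=.
rewrite [RHS]exchange_big /=; under [RHS]eq_bigr do rewrite exchange_big /=.
rewrite big_distrr /=; apply: eq_bigr => k _.
transitivity (\sum_l v k * w l * (\sum_a g a k * g a l)).
  rewrite (bigD1 k) //= g_cols eqxx big1 ?addr0 => [|l lk]; first by rewrite mulr1 mulrC.
  by rewrite g_cols eq_sym (negbTE lk) !mulr0.
apply: eq_bigr => l _; rewrite big_distrr /=; apply: eq_bigr => a _.
by rewrite mulrACA [v k * _]mulrC [w l * _]mulrC.
Qed.

Lemma annihilated_orthogonal P v w :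
  annihilated P v -> annihilated (predC P) w -> \sum_k v k * w k = 0.
Proof.
move=> Pv Pw; apply: (mulfI c_neq0); rewrite mulr0 parseval.
by apply: big1 => a _; have [/Pv -> | /Pw ->] := boolP (P a); rewrite ?mul0r ?mulr0.
Qed.

Lemma annihilated_comb P x y (p q : int) :
  annihilated P x -> annihilated P y -> annihilated P [ffun k => p * x k - q * y k].
Proof.
move=> Px Py a Pa.
under eq_bigr => k _ do rewrite ffunE mulrBr mulrCA [g a k * (q * _)]mulrCA.
by rewrite sumrB -!big_distrr /= Px // Py // !mulr0 subr0.
Qed.

Lemma annihilated_minimal_below P t x : annihilated P x -> x t != 0 ->
  exists v, [/\ support_minimal (annihilated P) v, supp v \subset supp x & v t != 0].
Proof.
have [m] := ubnP #|supp x|; elim: m x => // m IH x lt_x_m Px xt.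
have [[v [Pv v0 ltv]] | no_smaller] :=
  classic (exists v, [/\ annihilated P v, v != 0 & supp v \proper supp x]); last first.
  exists x; split=> //; split=> // [|v Pv v0 ltv]; last by apply: no_smaller; exists v.
  by apply/ffun_neq0P; exists t.
have [z [Pz ltz zt]] : exists z, [/\ annihilated P z, supp z \proper supp x & z t != 0].
  have [vt0 | vt] := eqVneq (v t) 0; last by exists v.
  have [k vk] := ffun_neq0P _ v0.
  have lev := proper_sub ltv.
  have xk : x k != 0 by rewrite -in_supp (subsetP lev) ?in_supp.
  exists [ffun j => v k * x j - x k * v j]; split.
  - exact: annihilated_comb.
  - apply/properP; split; last by exists k; rewrite ?in_supp // ffunE mulrC subrr eqxx.
    apply/subsetP => j; rewrite !in_supp ffunE; apply: contraNneq => xj0.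
    have vj0 : v j = 0.
      apply/eqP; apply: contraT => vj.
      by move: (subsetP lev j); rewrite !in_supp xj0 eqxx => /(_ vj).
    by rewrite xj0 vj0 !mulr0 subrr.
  - by rewrite ffunE vt0 mulr0 subr0 mulf_neq0.
have [w [wmin lew wt]] := IH z (leq_trans (proper_card ltz) lt_x_m) Pz zt.
by exists w; split=> //; apply: subset_trans lew (proper_sub ltz).
Qed.

Lemma annihilated_of_rat P (x : K -> rat) :
  (forall a, P a -> \sum_k (g a k)%:~R * x k = 0) ->
  exists y, annihilated P y /\ forall k, (y k != 0) = (x k != 0).
Proof.
move=> Px; have [y [d [d0 yE]]] := clear_denominators x.
exists y; split=> [a Pa | k]; last by rewrite -(intr_eq0 rat) yE mulf_eq0 intr_eq0 negb_or d0.
apply/eqP; rewrite -(intr_eq0 rat) rmorph_sum /=.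
by under eq_bigr do rewrite intrM yE mulrCA; rewrite -big_distrr /= Px ?mulr0.
Qed.

Lemma compl_annihilates_span P (lam : I -> rat) b : ~~ P b ->
  \sum_k (g b k)%:~R * (\sum_(a | P a) lam a * (g a k)%:~R) = 0 :> rat.
Proof.
move=> nPb; under eq_bigr do rewrite big_distrr /=.
rewrite exchange_big /=; apply: big1 => a Pa.
have ba : (b == a) = false by apply: contraNF nPb => /eqP ->.
transitivity (lam a * (\sum_k g b k * g a k)%:~R).
  by rewrite rmorph_sum big_distrr /=; apply: eq_bigr => k _; rewrite intrM mulrCA.
by rewrite g_rows ba !mulr0.
Qed.

Lemma unit_vector_notin_span P w t0 t1 (lam : I -> rat) (mu : K -> rat) :
  support_minimal (annihilated (predC P)) w -> t0 \in supp w -> t1 \in supp w -> t0 != t1 ->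
  ~ forall k, (k == t0)%:R = \sum_(a | P a) lam a * (g a k)%:~R
                            + (if k \in supp w :\ t0 :\ t1 then mu k else 0).
Proof.
move=> [Pw w0 wmin] wt0 wt1 t01; set T := supp w :\ t0 :\ t1 => span_t0.
pose Y k := \sum_(a | P a) lam a * (g a k)%:~R.
have YE k : Y k = (k == t0)%:R - (if k \in T then mu k else 0) by rewrite span_t0 addrK.
have t0T : t0 \in T = false by rewrite !inE eqxx andbF.
have [y [Py yY]] := annihilated_of_rat (P := predC P) (x := Y) (compl_annihilates_span lam).
case: (wmin y Py).
- by apply/ffun_neq0P; exists t0; rewrite yY YE eqxx t0T subr0 oner_neq0.
- apply/properP; split; last first.
    exists t1 => //; rewrite in_supp yY YE [t1 == t0]eq_sym (negbTE t01).
    by rewrite !inE eqxx subr0 negbK.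
  apply/subsetP => k; rewrite !in_supp yY YE.
  have [kT | kT] := boolP (k \in T); first by move: kT; rewrite !inE => /and3P[].
  have [-> | kt0] := eqVneq k t0; first by rewrite -in_supp.
  by rewrite subr0 eqxx.
Qed.

Lemma annihilated_avoiding P w t0 t1 :
  support_minimal (annihilated (predC P)) w -> t0 \in supp w -> t1 \in supp w -> t0 != t1 ->
  exists x, [/\ annihilated P x, {in supp w :\ t0 :\ t1, forall t, x t = 0} & x t0 != 0].
Proof.
move=> wmin wt0 wt1 t01; set T := supp w :\ t0 :\ t1.
pose f (j : I + K) k : rat := match j with
  | inl a => if P a then (g a k)%:~R else 0
  | inr t => if t \in T then (t == k)%:R else 0 end.
have [[lam span_t0] | [x [fx0 x_t0]]] := fredholm_alternative f (fun k => (k == t0)%:R).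
  case: (unit_vector_notin_span (lam := lam \o inl) (mu := lam \o inr) wmin wt0 wt1 t01) => k.
  rewrite span_t0 big_sumType /=; congr (_ + _).
    by rewrite [RHS]big_mkcond; apply: eq_bigr => a _; rewrite /f; case: (P a); rewrite ?mulr0.
  rewrite (bigD1 k) //= big1 ?addr0 => [|t tk]; rewrite /f -/T.
    by case: ifP; rewrite ?eqxx ?mulr1 ?mulr0.
  by case: ifP; rewrite ?(negbTE tk) ?mulr0.
have [x' [Px' x'x]] : exists x', annihilated P x' /\ forall k, (x' k != 0) = (x k != 0).
  by apply: annihilated_of_rat => a Pa; have := fx0 (inl a); rewrite /f Pa.
exists x'; split=> // [t tT|]; last first.
  move: x_t0; rewrite x'x (bigD1 t0) //= eqxx mul1r big1 ?addr0 // => k kt0.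
  by rewrite (negbTE kt0) mul0r.
apply/eqP; rewrite -[_ == 0]negbK x'x negbK; apply/eqP.
have := fx0 (inr t); rewrite /f /= tT (bigD1 t) //= eqxx mul1r big1 ?addr0 // => k tk.
by rewrite [t == k]eq_sym (negbTE tk) mul0r.
Qed.

Lemma balanced_compl P : balanced (annihilated P) -> balanced (annihilated (predC P)).
Proof.
move=> balP w wmin t0 t1 wt0 wt1; have [-> // | t01] := eqVneq t0 t1.
rewrite -!in_supp in wt0 wt1.
have [x [Px xT xt0]] := annihilated_avoiding wmin wt0 wt1 t01.
have [v [vmin lev vt0]] := annihilated_minimal_below Px xt0.
have [[Pv _ _] [Pw _ _]] := (vmin, wmin).
have vT t : t \in supp w :\ t0 :\ t1 -> v t = 0.
  move=> tT; apply/eqP; apply: contraT => vt.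
  by move: (subsetP lev t); rewrite !in_supp xT // eqxx => /(_ vt).
have two_terms : v t0 * w t0 + v t1 * w t1 = 0.
  rewrite -(annihilated_orthogonal Pv Pw) (bigD1 t0) //= (bigD1 t1) 1?eq_sym //= addrA.
  rewrite big1 ?addr0 // => k /andP [kt1 kt0].
  have [-> | wk] := eqVneq (w k) 0; first by rewrite mulr0.
  by rewrite vT ?mul0r // !inE kt1 kt0.
have vt1 : v t1 != 0.
  apply: contraPneq two_terms => ->; rewrite mul0r addr0; apply/eqP.
  by rewrite mulf_neq0 // -in_supp.
have norm_eq : `|v t0| * `|w t0| = `|v t1| * `|w t1|.
  by rewrite -!normrM; move/eqP: two_terms; rewrite addr_eq0 => /eqP ->; rewrite normrN.
apply: (mulfI (x := `|v t1|)); first by rewrite normr_eq0.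
by rewrite -{1}(balP v vmin t0 t1 vt0 vt1).
Qed.

Lemma balanced_complE P : balanced (annihilated P) <-> balanced (annihilated (predC P)).
Proof.
split=> [|/balanced_compl]; first exact: balanced_compl.
by apply: balanced_ext => u; split=> Pu a /= Pa; apply: Pu; rewrite //= negbK in Pa *.
Qed.

End OrthogonalComplement.

Definition sgb (b : bool) : int := if b then -1 else 1.

Lemma sgb_sqr b : sgb b * sgb b = 1. Proof. by case: b. Qed.

Definition walsh n (S : {set 'I_n}) (i : colT n) : int :=
  \prod_j (if j \in S then sgb (i j) else 1).

Section Walsh.
Variable n : nat.
Implicit Types (S T F : {set 'I_n}) (e i l : colT n).

Lemma walshM S i l :
  walsh S i * walsh S l = \prod_j (if j \in S then sgb (i j) * sgb (l j) else 1).
Proof. by rewrite -big_split; apply: eq_bigr => j _; case: (j \in S); rewrite ?mulr1. Qed.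

Lemma walshC S i : walsh (~: S) i = walsh S i * walsh setT i.
Proof.
rewrite -big_split; apply: eq_bigr => j _; rewrite in_setT inE.
by case: (j \in S); rewrite /= ?sgb_sqr ?mul1r.
Qed.

Lemma walsh_setT_sqr i : walsh setT i * walsh setT i = 1.
Proof. by rewrite walshM big1 // => j _; rewrite in_setT sgb_sqr. Qed.

Lemma sum_prod_subsets (G : 'I_n -> int) :
  \sum_(S : {set 'I_n}) \prod_j (if j \in S then G j else 1) = \prod_j (G j + 1).
Proof. by rewrite bigA_distr. Qed.

Lemma walsh_cols_orthogonal i l :
  \sum_(S : {set 'I_n}) walsh S i * walsh S l = 2 ^+ n * (i == l)%:R.
Proof.
under eq_bigr do rewrite walshM; rewrite sum_prod_subsets.
have [<- | neq_il] := eqVneq i l.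
  by rewrite mulr1 (eq_bigr (fun _ => 2)) ?prodr_const ?card_ord // => j _; rewrite sgb_sqr.
have [j ij] : exists j, i j != l j.
  apply/existsP; apply: contraNT neq_il => /existsPn eq_il.
  by apply/eqP/ffunP => j; apply/eqP/negbNE/eq_il.
by rewrite mulr0 (bigD1 j) //=; move: ij; case: (i j); case: (l j); rewrite //= mul0r.
Qed.

Lemma walsh_rows_orthogonal S T : \sum_i walsh S i * walsh T i = 2 ^+ n * (S == T)%:R.
Proof.
under eq_bigr do rewrite -big_split /=.
rewrite -(bigA_distr_bigA
  (fun j b => (if j \in S then sgb b else 1) * (if j \in T then sgb b else 1))).
rewrite (eq_bigr (fun j => if (j \in S) == (j \in T) then 2 else 0)) => [|j _]; last first.
  by rewrite /= big_bool /=; case: (j \in S); case: (j \in T).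
have [<- | neq_ST] := eqVneq S T.
  by rewrite mulr1 (eq_bigr (fun _ => 2)) ?prodr_const ?card_ord // => j _; rewrite eqxx.
have [j Sj] : exists j, (j \in S) != (j \in T).
  apply/existsP; apply: contraNT neq_ST => /existsPn eq_ST.
  by apply/eqP/setP => j; apply/eqP/negbNE/eq_ST.
by rewrite mulr0 (bigD1 j) //= (negbTE Sj) mul0r.
Qed.

Lemma sum_walsh_subsets F e i :
  \sum_(S : {set 'I_n} | S \subset F) walsh S e * walsh S i =
  2 ^+ #|F| * [forall j in F, e j == i j]%:R.
Proof.
rewrite big_mkcond /=.
under eq_bigr => S _.
  have -> : (if S \subset F then walsh S e * walsh S i else 0) =
      \prod_j (if j \in S then (if j \in F then sgb (e j) * sgb (i j) else 0) else 1).
    have [SF | /subsetPn [j jS jF]] := boolP (S \subset F).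
      by rewrite walshM; apply: eq_bigr => j _; case: ifP => // /(subsetP SF) ->.
    by rewrite (bigD1 j) //= jS (negbTE jF) mul0r.
  over.
rewrite sum_prod_subsets.
have [/forall_inP eq_ei | /forall_inPn [j jF neq_ei]] := boolP [forall j in F, e j == i j].
  rewrite mulr1 (bigID (mem F)) /= [X in _ * X]big1 ?mulr1 => [|j /negbTE -> //].
  rewrite (eq_bigr (fun _ => 2)) ?prodr_const // => j jF.
  by rewrite jF (eqP (eq_ei j jF)) sgb_sqr.
rewrite mulr0 (bigD1 j) //= jF.
by move: neq_ei; case: (e j); case: (i j); rewrite //= mul0r.
Qed.

End Walsh.

Lemma exists_facet_above n (C : {set {set 'I_n}}) S :
  S \in C -> exists2 F, is_facet C F & S \subset F.
Proof.
move=> SC; have SS : (S \in C) && (S \subset S) by rewrite SC subxx.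
case: (@arg_maxnP _ S (fun G => (G \in C) && (S \subset G)) (fun G => #|G|) SS).
move=> F /andP [FC SF] Fmax; exists F => //; rewrite /is_facet FC.
apply/forall_inP => G GC; apply/implyP => FG.
by rewrite eq_sym eqEcard FG; apply: Fmax; rewrite GC (subset_trans SF FG).
Qed.

Definition restrict n (F : {set 'I_n}) (i : colT n) : colT n := [ffun j => (j \in F) && i j].

Lemma A_matE n (C : {set {set 'I_n}}) (r : rowT C) i :
  A_mat r i = (restrict (val r).1 i == (val r).2)%:R.
Proof.
case: r => [[F e] row_Fe]; have /andP [_ /forallP e_can] := row_Fe; rewrite /A_mat /=.
suff -> : [forall j in F, e j == i j] = (restrict F i == e) by [].
apply/forall_inP/eqP => [eq_ei | <- j jF]; last by rewrite ffunE jF.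
apply/ffunP => j; rewrite ffunE.
have [jF | jF] := boolP (j \in F); first by rewrite (eqP (eq_ei j jF)).
by have := e_can j; rewrite jF => /negbTE ->.
Qed.

Section KernelWalsh.
Variables (n : nat) (C : {set {set 'I_n}}).
Hypothesis C_complex : simplicial_complex C.
Implicit Types (u : {ffun colT n -> int}) (S F : {set 'I_n}).

Lemma in_kernel_orth_walsh u S :
  in_kernel (@A_mat n C) u -> S \in C -> \sum_i walsh S i * u i = 0.
Proof.
move=> /forallP ker_u SC; have [F facetF SF] := exists_facet_above SC.
pose canonical (e : colT n) := [forall j, (j \notin F) ==> ~~ e j].
(* Row (F, e) of A_C is the indicator of the fibre of restrict F over e,
   and walsh S is constant on these fibres. *)
have walsh_restrict i : walsh S i = walsh S (restrict F i).
  by apply: eq_bigr => j _; case: ifP => // /(subsetP SF) jF; rewrite ffunE jF.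
rewrite (partition_big (restrict F) canonical) => [|i _]; last first.
  by apply/forallP => j; apply/implyP => /negbTE jF; rewrite ffunE jF.
apply: big1 => e can_e; have row_e : is_row C (F, e) by rewrite /is_row facetF.
rewrite (eq_bigr (fun i => walsh S e * u i)) => [|i /andP [_ /eqP <-]]; last first.
  by rewrite -walsh_restrict.
rewrite -big_distrr /= [X in _ * X](_ : _ = 0) ?mulr0 //.
rewrite big_mkcond /= -[RHS](eqP (ker_u (exist _ (F, e) row_e))).
by apply: eq_bigr => i _; rewrite A_matE /=; case: eqP; rewrite ?mul1r ?mul0r.
Qed.

Lemma orth_walsh_in_kernel u :
  (forall S, S \in C -> \sum_i walsh S i * u i = 0) -> in_kernel (@A_mat n C) u.
Proof.
move=> orth_u; apply/forallP => -[[F e] row_Fe]; apply/eqP.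
have /andP [/andP [FC _] _] := row_Fe.
have pow_neq0 : (2 ^+ #|F| : int) != 0 by rewrite expf_neq0.
apply: (mulfI pow_neq0); rewrite mulr0 /A_mat /= mulr_sumr.
transitivity (\sum_i \sum_(S : {set 'I_n} | S \subset F) walsh S e * walsh S i * u i).
  by apply: eq_bigr => i _; rewrite mulrA -sum_walsh_subsets mulr_suml.
rewrite exchange_big /=; apply: big1 => S SF.
under eq_bigr do rewrite -mulrA.
by rewrite -big_distrr /= orth_u ?mulr0 // (C_complex FC).
Qed.

Lemma in_kernel_walshE u :
  in_kernel (@A_mat n C) u <-> annihilated (@walsh n) [pred S | S \in C] u.
Proof. by split=> [/in_kernel_orth_walsh | /orth_walsh_in_kernel]; apply. Qed.

End KernelWalsh.

Lemma alexander_dual_complex n (C : {set {set 'I_n}}) :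
  simplicial_complex C -> simplicial_complex (alexander_dual C).
Proof.
move=> C_complex F G; rewrite !inE => CF GF.
by apply: contra CF => CG; apply: C_complex CG _; rewrite setCS.
Qed.

Lemma in_kernel_dual_walshE n (C : {set {set 'I_n}}) :
  simplicial_complex C -> forall u,
  in_kernel (@A_mat n (alexander_dual C)) u <->
  annihilated (@walsh n) (predC [pred S | S \in C]) (twist (walsh setT) u).
Proof.
move=> /alexander_dual_complex dual_complex u; rewrite (in_kernel_walshE dual_complex).
split=> orth_u S /= CS.
  rewrite -[RHS](orth_u (~: S)) /= ?inE ?setCK //.
  by apply: eq_bigr => i _; rewrite ffunE mulrA -walshC.
rewrite inE in CS; rewrite -[RHS](orth_u (~: S)) //.
by apply: eq_bigr => i _; rewrite ffunE mulrA -walshC setCK.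
Qed.

Theorem proposition3p7 (n : nat) (C : {set {set 'I_n}}) :
  simplicial_complex C ->
  (unimodular_complex C <-> unimodular_complex (alexander_dual C)).
Proof.
move=> C_complex; rewrite /unimodular_complex !unimodular_mxE.
have pow_neq0 : (2 ^+ n : int) != 0 by rewrite expf_neq0.
rewrite (eq_balanced (in_kernel_walshE C_complex)).
rewrite (balanced_complE pow_neq0 (@walsh_rows_orthogonal n) (@walsh_cols_orthogonal n)).
rewrite (balanced_twistE (@walsh_setT_sqr n)).
by rewrite (eq_balanced (in_kernel_dual_walshE C_complex)).
Qed.
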